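(* Let $s=(s_1,\ldots,s_n)$ be a sequence of positive integers. Then the local $h^\ast$-polynomial of the $s$-lecture hall simplex $P_n^s$ is \[ \ell^\ast(P_n^s;z)=\sum_{e\in\widetilde{I_n^s}}z^{\mathrm{asc}(e)}=\sum_{e\in\widetilde{I_n^s}}z^{\mathrm{des}(e)}. \]
   Context: $P_n^s=\{x\in\mathbb{R}^n: 0\le x_1/s_1\le\cdots\le x_n/s_n\le 1\}$. For a lattice $d$-simplex $\Delta=\mathrm{conv}(v^{(0)},\ldots,v^{(d)})\subset\mathbb{R}^n$, $\ell^\ast(\Delta;z)=\sum_{x\in\Pi^\circ_\Delta\cap\mathbb{Z}^{n+1}}z^{x_{n+1}}$ where $\Pi^\circ_\Delta=\{\sum_{i=0}^d\lambda_i(v^{(i)},1): 0<\lambda_i<1\}$. Set $s_0=s_{n+1}=1$ and let $\widetilde{I_n^s}$ be the set of integer sequences $(e_0,e_1,\ldots,e_{n+1})$ with $e_0=e_{n+1}=0$, $0\le e_i<s_i$ for $i\in[n]$, and $e_i/s_i\neq e_{i+1}/s_{i+1}$ for all $i\in\{0,\ldots,n\}$. For such $e$, an index $i\in\{0,\ldots,n\}$ is an ascent if $e_i/s_i<e_{i+1}/s_{i+1}$ and a descent if $e_i/s_i>e_{i+1}/s_{i+1}$; $\mathrm{asc}(e),\mathrm{des}(e)$ count them. *)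

From HB Require Import structures.
From mathcomp Require Import all_boot all_order all_algebra.
From mathcomp Require Import boolp reals.
Set Implicit Arguments. Unset Strict Implicit. Unset Printing Implicit Defensive.
Import Order.TTheory GRing.Theory Num.Theory.
Local Open Scope ring_scope.

(* A lattice d-simplex in R^n is given by its vertex matrix V : rows
   v^(0),...,v^(d) (each in Z^n).  [wc V i j] is coordinate j of the lifted
   vector (v^(i),1) in Z^(n+1); the last coordinate (index ord_max) is 1. *)
Definition wc (d n : nat) (V : 'M[int]_(d.+1, n)) (i : 'I_d.+1) (j : 'I_n.+1)
  : int :=
  match unlift ord_max j with Some j' => V i j' | None => 1 end.

Definition in_open_par (R : realType) (d n : nat) (V : 'M[int]_(d.+1, n))
  (x : 'I_n.+1 -> int) : Prop :=
  exists lam : 'I_d.+1 -> R,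
    (forall i, 0 < lam i < 1) /\
    (forall j, (x j)%:~R = \sum_(i < d.+1) lam i * (wc V i j)%:~R).

(* Every point of Pi°_Delta has |x_j| <= B, with B the sum of all |w_ij|;
   so the lattice points of Pi°_Delta are among the integer vectors of the
   box [-B,B]^(n+1), encoded as k |-> k - B for k : 'I_(2B+1). *)
Definition pbound (d n : nat) (V : 'M[int]_(d.+1, n)) : nat :=
  (\sum_(i < d.+1) \sum_(j < n.+1) `|wc V i j|)%N.

Definition boxpt (B m : nat) (x : {ffun 'I_m -> 'I_(2 * B).+1}) (j : 'I_m)
  : int := (x j)%:Z - B%:Z.

Definition lstar (R : realType) (d n : nat) (V : 'M[int]_(d.+1, n)) : {poly int} :=
  \sum_(x : {ffun 'I_n.+1 -> 'I_(2 * pbound V).+1}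
          | `[< in_open_par R V (boxpt x) >])
     'X^(absz (boxpt x ord_max)).

(* P_n^s = {0 <= x_1/s_1 <= ... <= x_n/s_n <= 1} = conv(v^(0),...,v^(n)),
   where (0-indexed coordinates j = 0..n-1) v^(i)_j = s_j if i <= j, else 0;
   v^(0) = (s_1,...,s_n) and v^(n) = 0. *)
Definition lhs_vert (n : nat) (s : 'I_n -> nat) : 'M[int]_(n.+1, n) :=
  \matrix_(i < n.+1, j < n) (if (i <= j)%N then (s j)%:Z else 0).

(* e : 'I_n -> nat encodes (e_1,...,e_n); the full sequence is
   (e_0,...,e_{n+1}) with e_0 = e_{n+1} = 0, and s_0 = s_{n+1} = 1. *)
Definition ext_e (n : nat) (e : 'I_n -> nat) (k : nat) : nat :=
  match k with
  | 0 => 0%N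
  | k'.+1 => if (k' < n)%N =P true is ReflectT h then e (Ordinal h) else 0%N
  end.

Definition ext_s (n : nat) (s : 'I_n -> nat) (k : nat) : nat :=
  match k with
  | 0 => 1%N
  | k'.+1 => if (k' < n)%N =P true is ReflectT h then s (Ordinal h) else 1%N
  end.

Definition ratio (n : nat) (s e : 'I_n -> nat) (k : nat) : rat :=
  (ext_e e k)%:R / (ext_s s k)%:R.

(* Upper bound for the entries e_i (< s_i <= smax). *)
Definition smax (n : nat) (s : 'I_n -> nat) : nat := (\max_(i < n) s i)%N.

Definition inItilde (n : nat) (s : 'I_n -> nat)
  (e : {ffun 'I_n -> 'I_(smax s)}) : bool :=
  [forall i : 'I_n, (e i < s i)%N] &&
  [forall i : 'I_n.+1,
     ratio s (fun j => nat_of_ord (e j)) i != ratio s (fun j => nat_of_ord (e j)) i.+1].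

Definition asc (n : nat) (s : 'I_n -> nat) (e : {ffun 'I_n -> 'I_(smax s)}) : nat :=
  #|[set i : 'I_n.+1 | ratio s (fun j => nat_of_ord (e j)) i
                        < ratio s (fun j => nat_of_ord (e j)) i.+1]|.

Definition des (n : nat) (s : 'I_n -> nat) (e : {ffun 'I_n -> 'I_(smax s)}) : nat :=
  #|[set i : 'I_n.+1 | ratio s (fun j => nat_of_ord (e j)) i
                        > ratio s (fun j => nat_of_ord (e j)) i.+1]|.

Arguments inItilde {n} s e.
Arguments asc {n} s e.
Arguments des {n} s e.

From Pilot Require Import Defs.
From HB Require Import structures.
From mathcomp Require Import all_boot all_order all_algebra.
From mathcomp Require Import boolp reals zify ring lra.
Import Order.TTheory GRing.Theory Num.Theory.
Set Implicit Arguments. Unset Strict Implicit. Unset Printing Implicit Defensive.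
Local Open Scope ring_scope.

(* Writing a point of the open parallelepiped of P_n^s as
   x = sum_i lam_i (v^(i), 1), one gets x_k / s_k = lam_0 + ... + lam_(k-1)
   (with s_(n+1) = 1), so its lattice points are the integer vectors whose
   normalised coordinates t_0 = 0, t_k = x_k / s_k increase by steps in (0,1).
   Split t_k = c_k + e_k / s_k into integer and fractional parts, with
   0 <= e_k < s_k: a step lies in (0,1) exactly when e_k / s_k differs from
   e_(k+1) / s_(k+1) and c_(k+1) - c_k is 1 at a descent and 0 otherwise.
   Hence x |-> (x_k mod s_k)_k is a bijection onto I~_n^s, under which
   x_(n+1) = c_(n+1) = des(e).  The reflection x |-> sum_i (v^(i), 1) - x of
   the parallelepiped turns the last coordinate into n + 1 - des(e) = asc(e). *)

Lemma int_add_in01 (z : int) (d : rat) : -1 < d < 1 ->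
  (0 < z%:~R + d < 1) = (d != 0) && (z == (nat_of_bool (d < 0))%:Z).
Proof.
move=> /andP[d_gtN1 d_lt1].
have [z_leN1|[z_ge2|z01]] : z <= -1 \/ 2 <= z \/ z = 0 \/ z = 1 by lia.
- have : z%:~R <= -1 :> rat by rewrite -(rmorphN1 intr) ler_int.
  move=> z_le; rewrite (_ : 0 < _ = false) /=; last first.
    by apply/negbTE; rewrite -leNgt; lra.
  by rewrite andbC; case: (d < 0); case: eqP => // ?; lia.
- have : 2 <= z%:~R :> rat by rewrite -[2 : rat]/((2 : int)%:~R) ler_int.
  move=> z_ge; rewrite (_ : _ < 1 = false) ?andbF; last first.
    by apply/negbTE; rewrite -leNgt; lra.
  by rewrite andbC; case: (d < 0); case: eqP => // ?; lia.
case: z01 => ->; case: (ltrgtP d 0) => /= d0.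
all: rewrite ?mulr0z ?mulr1z ?add0r ?eqz_nat /=.
all: first [apply/negbTE/negP => /andP[? ?]; lra | apply/andP; split; lra].
Qed.

Lemma intfrac_gap_in01 (c1 c2 : int) (r1 r2 : rat) :
  0 <= r1 < 1 -> 0 <= r2 < 1 ->
  (0 < (c2%:~R + r2) - (c1%:~R + r1) < 1) =
  (r1 != r2) && (c2 == c1 + (nat_of_bool (r2 < r1))%:Z).
Proof.
move=> /andP[r1_ge0 r1_lt1] /andP[r2_ge0 r2_lt1].
have -> : (c2%:~R + r2) - (c1%:~R + r1) = (c2 - c1)%:~R + (r2 - r1).
  by rewrite rmorphB /=; ring.
rewrite int_add_in01; last by apply/andP; split; lra.
by rewrite subr_eq0 eq_sym subr_lt0 subr_eq addrC.
Qed.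

Section OpenParallelepiped.
Variables (R : realType) (d n : nat) (V : 'M[int]_(d.+1, n)).

Lemma open_par_bound x j : in_open_par R V x -> (`|x j| <= pbound V)%N.
Proof.
case=> lam [lam01 xE].
have x_le : (`|x j| <= \sum_(i < d.+1) `|wc V i j|)%N.
  rewrite -(ler_nat R) natr_sum natr_absz intr_norm xE.
  apply: le_trans (ler_norm_sum _ _ _) _; apply: ler_sum => i _.
  rewrite normrM natr_absz intr_norm; have /andP[lam_gt0 lam_lt1] := lam01 i.
  rewrite (ger0_norm (ltW lam_gt0)); have := normr_ge0 ((wc V i j)%:~R : R); nra.
apply: leq_trans x_le _; apply: leq_sum => i _.
by rewrite (bigD1 j) //= leq_addr.
Qed.

Definition box_enc (x : 'I_n.+1 -> int) : {ffun 'I_n.+1 -> 'I_(2 * pbound V).+1} :=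
  [ffun j => inord (absz (x j + (pbound V)%:Z))].

Lemma box_encK x : box_enc (boxpt x) = x.
Proof.
apply/ffunP => j; apply: val_inj.
by rewrite ffunE /boxpt subrK absz_nat /= inordK.
Qed.

Lemma boxpt_enc x : in_open_par R V x -> boxpt (box_enc x) = x.
Proof.
move=> /open_par_bound x_le; apply: funext => j; have := x_le j.
by rewrite /boxpt ffunE => ?; rewrite inordK; lia.
Qed.

Lemma lstar_bij (I : finType) (Q : pred I) (y : I -> 'I_n.+1 -> int)
    (f : ('I_n.+1 -> int) -> I) :
  (forall x, in_open_par R V x -> Q (f x) /\ y (f x) = x) ->
  (forall e, Q e -> in_open_par R V (y e) /\ f (y e) = e) ->
  lstar R V = \sum_(e | Q e) 'X^(absz (y e ord_max)).
Proof.
move=> fK yK; rewrite /lstar.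
rewrite (reindex_onto (fun e => box_enc (y e)) (fun x => f (boxpt x))) /=; last first.
  by move=> x; rewrite asboolE => /fK[_ ->]; apply: box_encK.
have encK e : Q e -> boxpt (box_enc (y e)) = y e by case/yK => /boxpt_enc.
apply: eq_big => [e|e /andP[/asboolP b_open /eqP <-]].
  case Qe: (Q e).
    have [y_open fy] := yK e Qe.
    by rewrite encK // fy eqxx andbT; apply/asboolP.
  by apply/negbTE/andP => -[/asboolP/fK[Qf _] /eqP fe]; rewrite -fe Qf in Qe.
by have [_ ->] := fK _ b_open; rewrite boxpt_enc.
Qed.

Definition par_top (j : 'I_n.+1) : int := \sum_(i < d.+1) wc V i j.

Lemma par_top_last : par_top ord_max = d.+1%:Z.
Proof.
rewrite /par_top (eq_bigr (fun=> 1)) => [|i _]; last by rewrite /wc unlift_none.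
by rewrite sumr_const card_ord natz.
Qed.

Lemma open_par_reflect x :
  in_open_par R V x -> in_open_par R V (fun j => par_top j - x j).
Proof.
case=> lam [lam01 xE]; exists (fun i => 1 - lam i); split.
  by move=> i; have /andP[? ?] := lam01 i; apply/andP; split; lra.
move=> j; rewrite rmorphB /= xE rmorph_sum -sumrB.
by apply: eq_bigr => i _; rewrite mulrBl mul1r.
Qed.

Lemma lstar_reflect_bij (I : finType) (Q : pred I) (y : I -> 'I_n.+1 -> int)
    (f : ('I_n.+1 -> int) -> I) :
  (forall x, in_open_par R V x -> Q (f x) /\ y (f x) = x) ->
  (forall e, Q e -> in_open_par R V (y e) /\ f (y e) = e) ->
  lstar R V = \sum_(e | Q e) 'X^(absz (d.+1%:Z - y e ord_max)).
Proof.
move=> fK yK; rewrite -par_top_last.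
pose flip x j := par_top j - x j.
have flipK : involutive flip by move=> x; apply: funext => j; rewrite /flip subKr.
apply: (@lstar_bij _ _ (fun e => flip (y e)) (fun x => f (flip x))) => [x|e Qe].
  by move=> /open_par_reflect/fK[-> ->]; rewrite flipK.
by have [/open_par_reflect y_open fy] := yK e Qe; rewrite flipK fy.
Qed.
End OpenParallelepiped.

Section LectureHallSimplex.
Variables (n : nat) (s : 'I_n -> nat).
Hypothesis s_gt0 : forall i, (0 < s i)%N.

Local Notation entries e := (fun j => nat_of_ord (e j)).
Local Notation ratio_of e := (Defs.ratio s (entries e)).

Lemma ext_s_lt j (j_lt : (j < n)%N) : ext_s s j.+1 = s (Ordinal j_lt).
Proof. by rewrite /=; case: eqP => // p; congr s; apply: val_inj. Qed.

Lemma ext_s_ge j : (n <= j)%N -> ext_s s j.+1 = 1%N.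
Proof.
by rewrite /= => n_le; case: eqP => // p; exfalso; move: p; rewrite ltnNge n_le.
Qed.

Lemma ext_e_lt (e : 'I_n -> nat) j (j_lt : (j < n)%N) :
  ext_e e j.+1 = e (Ordinal j_lt).
Proof. by rewrite /=; case: eqP => // p; congr e; apply: val_inj. Qed.

Lemma ext_e_ge (e : 'I_n -> nat) j : (n <= j)%N -> ext_e e j.+1 = 0%N.
Proof.
by rewrite /= => n_le; case: eqP => // p; exfalso; move: p; rewrite ltnNge n_le.
Qed.

Lemma ext_s_gt0 k : (0 < ext_s s k)%N.
Proof.
by case: k => // j; case: (ltnP j n) => [j_lt|/ext_s_ge ->]; rewrite ?ext_s_lt.
Qed.

Lemma ext_s_neq0 (F : numDomainType) k : (ext_s s k)%:R != 0 :> F.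
Proof. by rewrite pnatr_eq0 -lt0n ext_s_gt0. Qed.

Lemma ext_e_lt_ext_s (e : 'I_n -> nat) :
  (forall i, e i < s i)%N -> forall k, (ext_e e k < ext_s s k)%N.
Proof.
move=> e_lt [|j] //; case: (ltnP j n) => [j_lt|n_le].
  by rewrite ext_e_lt ext_s_lt.
by rewrite ext_e_ge ?ext_s_ge.
Qed.

Lemma wc_lhs_vert (i j : 'I_n.+1) :
  wc (lhs_vert s) i j = if (i <= j)%N then (ext_s s j.+1)%:Z else 0.
Proof.
rewrite /wc; case: unliftP => [j'|] ->; last by rewrite -ltnS ltn_ord ext_s_ge.
rewrite /lhs_vert mxE lift_max (ext_s_lt (ltn_ord j')).
by congr (if _ then Posz (s _) else _); apply: val_inj.
Qed.

(* [pt_ext y k] is the coordinate x_k of the paper, 1-indexed, with x_0 = 0. *)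
Definition pt_ext (y : 'I_n.+1 -> int) (k : nat) : int :=
  if k is k'.+1 then y (inord k') else 0.

Definition scaled (y : 'I_n.+1 -> int) (k : nat) : rat :=
  (pt_ext y k)%:~R / (ext_s s k)%:R.

Definition lhs_open (y : 'I_n.+1 -> int) : Prop :=
  forall k, (k <= n)%N -> 0 < scaled y k.+1 - scaled y k < 1.

Lemma scaled0 y : scaled y 0 = 0.
Proof. by rewrite /scaled mul0r. Qed.

Lemma scaledS y k : scaled y k.+1 = (y (inord k))%:~R / (ext_s s k.+1)%:R.
Proof. by []. Qed.

Lemma lhs_vert_comb (R : realType) (lam : 'I_n.+1 -> R) (j : 'I_n.+1) :
  \sum_(i < n.+1) lam i * (wc (lhs_vert s) i j)%:~R =
  (ext_s s j.+1)%:R * \sum_(0 <= i < j.+1) lam (inord i).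
Proof.
transitivity (\sum_(0 <= i < n.+1) lam (inord i) *
    (if (i <= j)%N then (ext_s s j.+1)%:R else 0)).
  rewrite big_mkord; apply: eq_bigr => i _; rewrite wc_lhs_vert inord_val.
  by case: ifP; rewrite ?mulr0.
rewrite (@big_cat_nat _ _ _ j.+1 0 n.+1) //=.
rewrite [X in _ + X]big1_seq ?addr0 => [|i]; last first.
  by rewrite mem_index_iota => /andP[_ /andP[j_lt _]]; rewrite leqNgt j_lt mulr0.
rewrite mulr_sumr; apply: eq_big_nat => i /andP[_ i_lt].
by rewrite -ltnS i_lt mulrC.
Qed.

Lemma in_open_par_lhsP (R : realType) y :
  in_open_par R (lhs_vert s) y <-> lhs_open y.
Proof.
have ratr_scaled k :
  ratr (scaled y k.+1) = (y (inord k))%:~R / (ext_s s k.+1)%:R :> R.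
  by rewrite scaledS fmorph_div rmorph_int rmorph_nat.
split=> [[lam [lam01 yE]] k k_le|y_open].
  pose L m := \sum_(0 <= i < m) lam (inord i).
  have scaledE m : (m <= n.+1)%N -> ratr (scaled y m) = L m.
    case: m => [|j] j_lt; first by rewrite scaled0 rmorph0 /L big_geq.
    by rewrite ratr_scaled yE lhs_vert_comb inordK // mulrC mulKf ?ext_s_neq0.
  have lamE : lam (inord k) = ratr (scaled y k.+1) - ratr (scaled y k).
    by rewrite !scaledE ?(leqW k_le) // /L big_nat_recr //= addrAC subrr add0r.
  have := lam01 (inord k).
  by rewrite lamE -rmorphB ltr0q -(rmorph1 (@ratr R)) ltr_rat.
exists (fun i : 'I_n.+1 => ratr (scaled y i.+1 - scaled y i)); split.
  move=> i; rewrite ltr0q -(rmorph1 (@ratr R)) ltr_rat.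
  by apply: y_open; rewrite -ltnS.
move=> j; rewrite lhs_vert_comb.
rewrite (eq_big_nat _ _ (F2 := fun i => ratr (scaled y i.+1 - scaled y i))); last first.
  by move=> i /andP[_ i_lt]; rewrite inordK // (leq_trans i_lt).
rewrite -rmorph_sum telescope_sumr // scaled0 subr0 scaledS inord_val.
by rewrite fmorph_div rmorph_int rmorph_nat mulrC divfK ?ext_s_neq0.
Qed.

Local Notation lhs_seq := {ffun 'I_n -> 'I_(smax s)}.

Definition des_prefix (e : lhs_seq) (k : nat) : nat :=
  (\sum_(i < k) nat_of_bool (ratio_of e i.+1 < ratio_of e i)%R)%N.

Definition lhs_point (e : lhs_seq) (j : 'I_n.+1) : int :=
  (ext_s s j.+1 * des_prefix e j.+1 + ext_e (entries e) j.+1)%N%:Z.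

Lemma residue_lt (y : int) (j : 'I_n) : (absz (y %% (s j)%:Z)%Z < s j)%N.
Proof.
have s_pos : 0 < (s j)%:Z by rewrite ltz_nat s_gt0.
by have := ltz_pmod y s_pos; have := modz_ge0 y (lt0r_neq0 s_pos); lia.
Qed.

Lemma residue_lt_smax (y : int) (j : 'I_n) : (absz (y %% (s j)%:Z)%Z < smax s)%N.
Proof. exact: leq_trans (residue_lt y j) (leq_bigmax j). Qed.

Definition lhs_residue (y : 'I_n.+1 -> int) : lhs_seq :=
  [ffun j => Ordinal (residue_lt_smax (y (widen_ord (leqnSn n) j)) j)].

Lemma lhs_residueE y j :
  lhs_residue y j = absz (y (widen_ord (leqnSn n) j) %% (s j)%:Z)%Z :> nat.
Proof. by rewrite ffunE. Qed.

Lemma lhs_residue_lt y j : (lhs_residue y j < s j)%N.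
Proof. by rewrite lhs_residueE residue_lt. Qed.

Lemma ext_e_residue y k : (k <= n.+1)%N ->
  (ext_e (entries (lhs_residue y)) k)%:Z = (pt_ext y k %% (ext_s s k)%:Z)%Z.
Proof.
case: k => [|j] j_le; first by rewrite /= mod0z.
case: (ltnP j n) => [j_lt|n_le]; last by rewrite ext_e_ge ?ext_s_ge ?modz1.
rewrite ext_e_lt ext_s_lt lhs_residueE /= gez0_abs ?modz_ge0 ?eqz_nat -?lt0n //.
by congr ((y _) %% _)%Z; apply: val_inj; rewrite /= inordK // ltnW.
Qed.

Lemma ratio_in01 (e : 'I_n -> nat) : (forall i, e i < s i)%N ->
  forall k, 0 <= Defs.ratio s e k < 1.
Proof.
move=> e_lt k; have := ext_e_lt_ext_s e_lt k.
have s_pos : 0 < (ext_s s k)%:R :> rat by rewrite ltr0n ext_s_gt0.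
by rewrite /Defs.ratio divr_ge0 //= ltr_pdivrMr // mul1r ltr_nat.
Qed.

Lemma scaled_residue y k : (k <= n.+1)%N ->
  scaled y k = ((pt_ext y k %/ (ext_s s k)%:Z)%Z)%:~R + ratio_of (lhs_residue y) k.
Proof.
move=> k_le; rewrite /Defs.ratio [X in X / _]pmulrn ext_e_residue // /scaled.
rewrite {1}(divz_eq (pt_ext y k) (ext_s s k)%:Z) rmorphD rmorphM /= mulrDl.
by rewrite -[((ext_s s k)%:Z)%:~R]pmulrn mulfK ?ext_s_neq0.
Qed.

Lemma lhs_open_step y k : lhs_open y -> (k <= n)%N ->
  let e := lhs_residue y in
  (ratio_of e k != ratio_of e k.+1) &&
  ((pt_ext y k.+1 %/ (ext_s s k.+1)%:Z)%Z ==
     (pt_ext y k %/ (ext_s s k)%:Z)%Z +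
     (nat_of_bool (ratio_of e k.+1 < ratio_of e k))%:Z).
Proof.
move=> y_open k_le; have := y_open k k_le.
by rewrite !scaled_residue ?(leqW k_le) // intfrac_gap_in01 // ratio_in01 // => i;
  apply: lhs_residue_lt.
Qed.

Lemma lhs_residue_in y : lhs_open y -> inItilde s (lhs_residue y).
Proof.
move=> y_open; apply/andP; split; apply/forallP => i; first exact: lhs_residue_lt.
by have /andP[] := lhs_open_step y_open (ltn_ord i).
Qed.

Lemma floor_scaled y : lhs_open y -> forall k, (k <= n.+1)%N ->
  (pt_ext y k %/ (ext_s s k)%:Z)%Z = (des_prefix (lhs_residue y) k)%:Z.
Proof.
move=> y_open; elim=> [|k IHk] k_le.
  by rewrite [pt_ext _ _]/= div0z /des_prefix big_ord0.
have /andP[_ /eqP ->] := lhs_open_step y_open k_le.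
rewrite IHk; last exact: ltnW.
by rewrite /des_prefix big_ord_recr PoszD.
Qed.

Lemma lhs_residueK y : lhs_open y -> lhs_point (lhs_residue y) = y.
Proof.
move=> y_open; apply: funext => j.
rewrite /lhs_point PoszD PoszM -floor_scaled ?ext_e_residue //.
by rewrite mulrC -divz_eq /= inord_val.
Qed.

Lemma scaled_point e k : (k <= n.+1)%N ->
  scaled (lhs_point e) k = ((des_prefix e k)%:Z)%:~R + ratio_of e k.
Proof.
case: k => [|j] j_le.
  by rewrite scaled0 /des_prefix big_ord0 /Defs.ratio /= !mul0r addr0.
rewrite scaledS /lhs_point inordK // /Defs.ratio -!pmulrn natrD natrM.
by field; rewrite ext_s_neq0.
Qed.

Lemma lhs_point_open e : inItilde s e -> lhs_open (lhs_point e).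
Proof.
case/andP => /forallP e_lt /forallP ratio_neq k k_le.
rewrite !scaled_point ?(leqW k_le) // intfrac_gap_in01 ?ratio_in01 //.
rewrite (ratio_neq (Ordinal (k_le : k < n.+1)%N)) /=.
by rewrite /des_prefix big_ord_recr PoszD eqxx.
Qed.

Lemma lhs_pointK e : inItilde s e -> lhs_residue (lhs_point e) = e.
Proof.
case/andP => /forallP e_lt _; apply/ffunP => j; apply: ord_inj.
rewrite lhs_residueE /lhs_point (ext_s_lt (ltn_ord j)) (ext_e_lt _ (ltn_ord j)).
have -> : Ordinal (ltn_ord j) = j by apply: val_inj.
by rewrite modz_nat absz_nat mulnC modnMDl modn_small.
Qed.

Lemma lhs_point_last e : lhs_point e ord_max = (des s e)%:Z.
Proof.
rewrite /lhs_point ext_s_ge ?ext_e_ge // mul1n addn0.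
congr Posz; rewrite /des -sum1_card big_mkcond; apply: eq_bigr => i _.
by rewrite inE; case: ifP.
Qed.

Lemma asc_add_des e : inItilde s e -> (asc s e + des s e)%N = n.+1.
Proof.
case/andP => _ /forallP ratio_neq.
rewrite /asc /des -!sum1_card big_mkcond [X in (_ + X)%N]big_mkcond -big_split.
transitivity (\sum_(i < n.+1) 1)%N; last by rewrite sum_nat_const card_ord muln1.
apply: eq_bigr => i _; rewrite !inE.
by have := ratio_neq i; case: ltrgtP.
Qed.
Lemma open_par_lhs_residueK (R : realType) y : in_open_par R (lhs_vert s) y ->
  inItilde s (lhs_residue y) /\ lhs_point (lhs_residue y) = y.
Proof.
by move=> /in_open_par_lhsP y_open; split; [apply: lhs_residue_in | apply: lhs_residueK].
Qed.

Lemma lhs_point_open_parK (R : realType) e : inItilde s e ->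
  in_open_par R (lhs_vert s) (lhs_point e) /\ lhs_residue (lhs_point e) = e.
Proof.
by move=> e_in; split; [apply/in_open_par_lhsP/lhs_point_open | apply: lhs_pointK].
Qed.
End LectureHallSimplex.

Unset Implicit Arguments.

Theorem proposition3p3 (R : realType) (n : nat) (s : 'I_n -> nat) :
  (forall i, (0 < s i)%N) ->
  lstar R (lhs_vert s) = \sum_(e | inItilde s e) 'X^(asc s e) /\
  lstar R (lhs_vert s) = \sum_(e | inItilde s e) 'X^(des s e).
Proof.
move=> s_gt0.
have residueK := @open_par_lhs_residueK n s s_gt0 R.
have pointK := @lhs_point_open_parK n s s_gt0 R.
split.
  rewrite (lstar_reflect_bij residueK pointK); apply: eq_bigr => e e_in.
  by rewrite lhs_point_last -(asc_add_des e_in) PoszD addrK.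
by rewrite (lstar_bij residueK pointK); apply: eq_bigr => e _; rewrite lhs_point_last.
Qed.
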